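(* For any two ${\cal X}_5$ formulas $\alpha$ and $\beta$: $\alpha$ and $\beta$ are strongly equivalent on substitutions if and only if $\alpha\Leftrightarrow\beta$ is valid in ${\cal X}_5$.
   Context: Fix a set $\mathit{At}$ of atoms. An explicit literal is $p$ or $\sim p$ for $p\in\mathit{At}$; a set of explicit literals is consistent if it never contains both $p$ and $\sim p$. Formulas: $\varphi ::= p\mid\bot\mid\varphi\wedge\varphi\mid\varphi\vee\varphi\mid\varphi\to\varphi\mid\sim\varphi$; abbreviations $\neg\varphi:=\varphi\to\bot$, $\top:=\neg\bot$, $\varphi\leftrightarrow\psi:=(\varphi\to\psi)\wedge(\psi\to\varphi)$, $\varphi\Leftrightarrow\psi:=(\varphi\leftrightarrow\psi)\wedge(\sim\varphi\leftrightarrow\sim\psi)$. A theory is a set of formulas. $\varphi[\alpha/p]$ denotes the result of replacing every occurrence of atom $p$ in $\varphi$ by $\alpha$. An ${\cal X}_5$-interpretation is a pair $\langle H,T\rangle$ of consistent sets of explicit literals with $H\subseteq T$. Satisfaction $\models$ and falsification $=\!\!|\;$: $\langle H,T\rangle\not\models\bot$, $\langle H,T\rangle=\!\!|\;\bot$; $\models p$ iff $p\in H$, $=\!\!|\;p$ iff $\sim p\in H$; $\models\varphi\wedge\psi$ iff both satisfied, $=\!\!|\;\varphi\wedge\psi$ iff at least one falsified; $\models\varphi\vee\psi$ iff at least one satisfied, $=\!\!|\;\varphi\vee\psi$ iff both falsified; $\models\sim\varphi$ iff $=\!\!|\;\varphi$, $=\!\!|\;\sim\varphi$ iff $\models\varphi$;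 $\langle H,T\rangle\models\varphi\to\psi$ iff (i) $\langle H,T\rangle\not\models\varphi$ or $\langle H,T\rangle\models\psi$ and (ii) $\langle T,T\rangle\not\models\varphi$ or $\langle T,T\rangle\models\psi$; $\langle H,T\rangle=\!\!|\;\varphi\to\psi$ iff $\langle T,T\rangle\models\varphi$ and $\langle H,T\rangle=\!\!|\;\psi$. A formula is valid if satisfied by every ${\cal X}_5$-interpretation. A model of a theory satisfies all its formulas. $\langle T,T\rangle$ is an equilibrium model of $\Gamma$ if it is a model of $\Gamma$ and there is no model $\langle H,T\rangle$ of $\Gamma$ with $H\subsetneq T$. Formulas $\alpha,\beta$ are strongly equivalent on substitutions if for every formula $\varphi$, every atom $p$, and every theory $\Delta$, the theories $\Delta\cup\{\varphi[\alpha/p]\}$ and $\Delta\cup\{\varphi[\beta/p]\}$ have the same equilibrium models. *)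

(* Nelson-style logic X5 (here-and-there with explicit negation). *)
From Stdlib Require Import ClassicalEpsilon.

Set Implicit Arguments.

Section X5.
Variable At : Type.

Inductive form : Type :=
| Atom : At -> form
| Bot : form
| And : form -> form -> form
| Or : form -> form -> form
| Imp : form -> form -> form
| SNeg : form -> form.

Definition Neg (f : form) : form := Imp f Bot.
Definition Top : form := Neg Bot.
Definition Iff (f g : form) : form := And (Imp f g) (Imp g f).
Definition SIff (f g : form) : form := And (Iff f g) (Iff (SNeg f) (SNeg g)).

Inductive lit : Type := PosL : At -> lit | NegL : At -> lit.

Definition litset := lit -> Prop.

Definition consistent (S : litset) : Prop := forall p, ~ (S (PosL p) /\ S (NegL p)).

Definition subset (S S' : litset) : Prop := forall l, S l -> S' l.

Definition interp (H T : litset) : Prop :=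
  consistent H /\ consistent T /\ subset H T.

Fixpoint sat (H T : litset) (f : form) : Prop :=
  match f with
  | Atom p => H (PosL p)
  | Bot => False
  | And f g => sat H T f /\ sat H T g
  | Or f g => sat H T f \/ sat H T g
  | Imp f g => (sat H T f -> sat H T g) /\ (sat T T f -> sat T T g)
  | SNeg f => fals H T f
  end
with fals (H T : litset) (f : form) : Prop :=
  match f with
  | Atom p => H (NegL p)
  | Bot => True
  | And f g => fals H T f \/ fals H T g
  | Or f g => fals H T f /\ fals H T g
  | Imp f g => sat T T f /\ fals H T g
  | SNeg f => sat H T f
  end.

Definition valid (f : form) : Prop :=
  forall H T, interp H T -> sat H T f.

Definition theory := form -> Prop.

Definition model (H T : litset) (G : theory) : Prop :=
  interp H T /\ forall f, G f -> sat H T f.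

Definition strict_subset (S S' : litset) : Prop :=
  subset S S' /\ ~ subset S' S.

Definition eq_model (T : litset) (G : theory) : Prop :=
  model T T G /\ ~ (exists H, strict_subset H T /\ model H T G).

Fixpoint subst (f : form) (a : form) (p : At) : form :=
  match f with
  | Atom q => if excluded_middle_informative (q = p) then a else Atom q
  | Bot => Bot
  | And f g => And (subst f a p) (subst g a p)
  | Or f g => Or (subst f a p) (subst g a p)
  | Imp f g => Imp (subst f a p) (subst g a p)
  | SNeg f => SNeg (subst f a p)
  end.

Definition add (D : theory) (f : form) : theory := fun g => D g \/ g = f.

Definition se_subst (a b : form) : Prop :=
  forall (phi : form) (p : At) (D : theory) (T : litset),
    eq_model T (add D (subst phi a p)) <-> eq_model T (add D (subst phi b p)).

End X5.

(* If α ⇔ β is valid, α and β agree on satisfaction and falsification in every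
   X5-interpretation, a property preserved by substitution into any context, so
   the substituted theories have the same models and hence the same equilibrium
   models.  Conversely, substituting into the contexts p and ∼p shows that α and
   β, and likewise ∼α and ∼β, are strongly equivalent, and strong equivalence
   forces agreement on every interpretation ⟨H,T⟩: if T refutes the second
   formula, the literals of T together with the first formula have ⟨T,T⟩ as an
   equilibrium model; if only H refutes it, the literals of H plus the
   implications between literals of T \ H pin ⟨T,T⟩ down as an equilibrium
   model of the second formula, while ⟨H,T⟩ is a smaller model with the first. *)

From Stdlib Require Import Classical ClassicalEpsilon FunctionalExtensionality PropExtensionality.

Set Implicit Arguments.
Unset Strict Implicit.

Section X5_equivalence.
Variable At : Type.
Implicit Types (H T S : litset At) (f g a b : form At).

Lemma subset_refl S : subset S S.
Proof. intros l x; exact x. Qed.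

Lemma interp_refl T : consistent T -> interp T T.
Proof. intros cT. repeat split; auto using subset_refl. Qed.

Lemma interp_total H T : interp H T -> interp T T.
Proof. intros [_ [cT _]]. apply interp_refl, cT. Qed.

Lemma sat_persist H T f : interp H T -> sat H T f -> sat T T f.
Proof.
  intros [_ [_ sHT]].
  enough (P : (sat H T f -> sat T T f) /\ (fals H T f -> fals T T f)) by apply P.
  induction f; simpl; try tauto.
  split; apply sHT.
Qed.

Lemma litset_ext S S' : subset S S' -> subset S' S -> S = S'.
Proof.
  intros s s'. apply functional_extensionality; intro l.
  apply propositional_extensionality; split; auto.
Qed.

Definition x5_equivalent f g : Prop :=
  forall H T, interp H T -> (sat H T f <-> sat H T g) /\ (fals H T f <-> fals H T g).

Lemma valid_SIff f g : valid (SIff f g) <-> x5_equivalent f g.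
Proof.
  unfold valid, SIff, Iff; simpl. split.
  - intros V H T I. specialize (V H T I). tauto.
  - intros E H T I.
    destruct (E H T I), (E T T (interp_total I)). tauto.
Qed.

Lemma x5_equivalent_subst a b phi p :
  x5_equivalent a b -> x5_equivalent (subst phi a p) (subst phi b p).
Proof.
  intros E. induction phi as [q| |f IHf g IHg|f IHf g IHg|f IHf g IHg|f IHf];
    intros H T I; simpl.
  - destruct (excluded_middle_informative (q = p)); simpl; [apply E, I | tauto].
  - tauto.
  - destruct (IHf H T I), (IHg H T I); tauto.
  - destruct (IHf H T I), (IHg H T I); tauto.
  - destruct (IHf H T I), (IHg H T I).
    destruct (IHf T T (interp_total I)), (IHg T T (interp_total I)); tauto.
  - destruct (IHf H T I); tauto.
Qed.

Definition strongly_equivalent f g : Prop :=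
  forall (D : theory At) T, eq_model T (add D f) <-> eq_model T (add D g).

Lemma strongly_equivalent_sym f g :
  strongly_equivalent f g -> strongly_equivalent g f.
Proof. intros SE D T. symmetry. apply SE. Qed.

Lemma x5_equivalent_strongly_equivalent f g :
  x5_equivalent f g -> strongly_equivalent f g.
Proof.
  intros E D T.
  assert (M : forall H, model H T (add D f) <-> model H T (add D g)).
  { intros H. unfold model, add.
    split; intros [I Mo]; split; auto; intros h [Dh | ->]; auto;
      apply (E H T I), Mo; auto. }
  unfold eq_model. rewrite (M T).
  split; intros [m nm]; split; auto; intros [H [s mH]]; apply nm;
    exists H; split; auto; apply M; auto.
Qed.

Definition litf (l : lit At) : form At :=
  match l with PosL p => Atom p | NegL p => SNeg (Atom p) end.

Lemma sat_litf H T l : sat H T (litf l) <-> H l.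
Proof. destruct l; simpl; tauto. Qed.

Definition lit_theory S : theory At := fun h => exists l, S l /\ h = litf l.

Definition gap_theory H T : theory At :=
  fun h => exists l1 l2, T l1 /\ ~ H l1 /\ T l2 /\ ~ H l2 /\ h = Imp (litf l1) (litf l2).

Definition union (D D' : theory At) : theory At := fun h => D h \/ D' h.

Lemma sat_lit_theory H T S h : subset S H -> lit_theory S h -> sat H T h.
Proof. intros sSH [l [Sl ->]]. apply sat_litf; auto. Qed.

Lemma lit_theory_subset H T S :
  (forall h, lit_theory S h -> sat H T h) -> subset S H.
Proof. intros M l Sl. apply (sat_litf H T l), M. exists l; auto. Qed.

Lemma eq_model_lit_theory T f :
  consistent T -> sat T T f -> eq_model T (add (lit_theory T) f).
Proof.
  intros cT Tf. split.
  - split; [apply interp_refl, cT|].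
    intros h [Lh | ->]; [apply sat_lit_theory with T; auto using subset_refl | exact Tf].
  - intros [H [[_ nsTH] [_ M]]]. apply nsTH.
    apply lit_theory_subset with T. intros h Lh. apply M. left; exact Lh.
Qed.

Lemma model_gap_theory H T f :
  interp H T -> sat H T f ->
  model H T (add (union (lit_theory H) (gap_theory H T)) f).
Proof.
  intros I Hf. split; [exact I|].
  intros h [[Lh | [l1 [l2 [_ [nH1 [T2 [_ ->]]]]]]] | ->].
  - apply sat_lit_theory with H; auto using subset_refl.
  - simpl. split; intro x; apply sat_litf in x; [contradiction | apply sat_litf; exact T2].
  - exact Hf.
Qed.

(* Any model ⟨H',T⟩ of the gap theory with H ⊆ H' ⊊ T must have H' = H: a
   literal of H' \ H would, through the implications, force all of T into H'. *)
Lemma eq_model_gap_theory H T g :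
  interp H T -> sat T T g -> ~ sat H T g ->
  eq_model T (add (union (lit_theory H) (gap_theory H T)) g).
Proof.
  intros I Tg nHg. split.
  - split; [exact (interp_total I)|].
    intros h [[Lh | [l1 [l2 [T1 [_ [T2 [_ ->]]]]]]] | ->].
    + apply sat_lit_theory with H; auto. apply I.
    + simpl. split; intros _; apply sat_litf; exact T2.
    + exact Tg.
  - intros [H' [[sH'T nsTH'] [_ M]]].
    assert (sHH' : subset H H').
    { apply lit_theory_subset with T. intros h Lh. apply M. left; left; exact Lh. }
    apply not_all_ex_not in nsTH'. destruct nsTH' as [l2 n2].
    apply imply_to_and in n2. destruct n2 as [T2 nH'2].
    destruct (classic (subset H' H)) as [sH'H | nsH'H].
    + rewrite (litset_ext sH'H sHH') in M. apply nHg, M. right; reflexivity.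
    + apply not_all_ex_not in nsH'H. destruct nsH'H as [l1 n1].
      apply imply_to_and in n1. destruct n1 as [H'1 nH1].
      assert (Im : sat H' T (Imp (litf l1) (litf l2))).
      { apply M. left; right. exists l1, l2. repeat split; auto. }
      apply nH'2, (sat_litf H' T l2), (proj1 Im), sat_litf, H'1.
Qed.

Lemma strongly_equivalent_sat f g H T :
  strongly_equivalent f g -> interp H T -> sat H T f -> sat H T g.
Proof.
  intros SE I Hf. apply NNPP; intro nHg.
  destruct (classic (sat T T g)) as [Tg | nTg].
  - assert (nsTH : ~ subset T H).
    { intro sTH. rewrite (litset_ext (proj2 (proj2 I)) sTH) in nHg. contradiction. }
    destruct (proj2 (SE _ T) (eq_model_gap_theory I Tg nHg)) as [_ nmin].
    apply nmin. exists H. split.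
    + split; [apply I | exact nsTH].
    + apply model_gap_theory; assumption.
  - destruct (proj1 (SE _ T) (eq_model_lit_theory (proj1 (proj2 I)) (sat_persist I Hf)))
      as [[_ M] _].
    apply nTg, M. right; reflexivity.
Qed.

Lemma strongly_equivalent_x5_equivalent a b :
  strongly_equivalent a b -> strongly_equivalent (SNeg a) (SNeg b) ->
  x5_equivalent a b.
Proof.
  intros SE SEn H T I.
  pose proof (strongly_equivalent_sym SE) as ES.
  pose proof (strongly_equivalent_sym SEn) as ESn.
  split; split; intro x.
  - exact (strongly_equivalent_sat SE I x).
  - exact (strongly_equivalent_sat ES I x).
  - exact (strongly_equivalent_sat SEn I x).
  - exact (strongly_equivalent_sat ESn I x).
Qed.

Lemma subst_Atom_self a p : subst (Atom p) a p = a.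
Proof. simpl. destruct (excluded_middle_informative (p = p)); congruence. Qed.

Lemma se_subst_strongly_equivalent a b (p : At) :
  se_subst a b -> strongly_equivalent a b /\ strongly_equivalent (SNeg a) (SNeg b).
Proof.
  intros SE. split; intros D T;
    rewrite <- (subst_Atom_self a p), <- (subst_Atom_self b p).
  - apply SE.
  - apply (SE (SNeg (Atom p))).
Qed.

End X5_equivalence.

Theorem theorem10 (At : Type) (inhab : inhabited At) (a b : form At) :
  se_subst a b <-> valid (SIff a b).
Proof.
  rewrite valid_SIff. split.
  - intros SE. destruct inhab as [p].
    destruct (se_subst_strongly_equivalent p SE) as [SEa SEn].
    exact (strongly_equivalent_x5_equivalent SEa SEn).
  - intros E phi p.
    apply x5_equivalent_strongly_equivalent, x5_equivalent_subst, E.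
Qed.
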